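(* Let $f\not\equiv 0$ be an odd entire function such that for all $x,y,z,w\in\mathbb{C}$ $$f(x)f(y)f(z)f(w)-f\Big(\tfrac{x+y+z-w}{2}\Big)f\Big(\tfrac{x+y-z+w}{2}\Big)f\Big(\tfrac{x-y+z+w}{2}\Big)f\Big(\tfrac{-x+y+z+w}{2}\Big)$$ $$-f\Big(\tfrac{x+y+z+w}{2}\Big)f\Big(\tfrac{x+y-z-w}{2}\Big)f\Big(\tfrac{x-y+z-w}{2}\Big)f\Big(\tfrac{x-y-z+w}{2}\Big)=0.$$ Then $f$ satisfies $$(f'(0))^3 f(2z)=f(z)^4\,(\ln f(z))''' \quad\text{for all } z,$$ where $(\ln f)'''$ denotes the meromorphic function $(f'/f)''$; equivalently $(f'(0))^3f(2z)=f^3f'''-3f^2f'f''+2f(f')^3$ with $f=f(z)$. *)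

From Stdlib Require Import Reals.
From Coquelicot Require Export Coquelicot.

Definition Cderiv (f : C -> C) (z l : C) : Prop :=
  @is_derive C_AbsRing C_NormedModule f z l.

Definition entire (f : C -> C) : Prop :=
  forall z : C, exists l : C, Cderiv f z l.

Definition odd_fun (f : C -> C) : Prop := forall z : C, f (Copp z) = Copp (f z).

Open Scope C_scope.
Definition quartic_eq (f : C -> C) : Prop :=
  forall x y z w : C,
    f x * f y * f z * f w
    - f ((x + y + z - w) / 2) * f ((x + y - z + w) / 2)
      * f ((x - y + z + w) / 2) * f ((- x + y + z + w) / 2)
    - f ((x + y + z + w) / 2) * f ((x + y - z - w) / 2)
      * f ((x - y + z - w) / 2) * f ((x - y - z + w) / 2)
    = 0.
Close Scope C_scope.

From Stdlib Require Import Reals.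
From Coquelicot Require Import Coquelicot.
From Stdlib Require Import Ring Field Lra.
Open Scope C_scope.

(* Put x = y = z = s + t and w = s - t in the functional equation.  Since f is
   odd, this gives the identity
     f(s+t)^3 f(s-t) - f(s+2t) f(s)^3 + f(2s+t) f(t)^3 = 0   for all t,
   whose third t-derivative at t = 0 is, as f(0) = 0,
     6 (f'(0)^3 f(2s) - f^3 f''' + 3 f^2 f' f'' - 2 f f'^3)(s). *)

Lemma RtoC_neq_0 (r : R) : r <> 0%R -> RtoC r <> 0.
Proof. intros Hr H; injection H; exact Hr. Qed.

Lemma Cmult_minus_eq_0 (c a b : C) : c <> 0 -> c * (a - b) = 0 -> a = b.
Proof.
  intros Hc H.
  replace a with (/ c * (c * (a - b)) + b) by now field.
  rewrite H; ring.
Qed.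

Lemma Cderiv_AbsRing (f : C -> C) (z l : C) :
  Cderiv f z l <-> @is_derive C_AbsRing (AbsRing_NormedModule C_AbsRing) f z l.
Proof. split; intros [[H1 H2 H3] H4]; split; [split| |split|]; assumption. Qed.

Lemma Cderiv_eq (f : C -> C) (z a b : C) : Cderiv f z a -> a = b -> Cderiv f z b.
Proof. now intros H <-. Qed.

Lemma Cderiv_ext (f g : C -> C) (z l : C) :
  (forall x, f x = g x) -> Cderiv f z l -> Cderiv g z l.
Proof. exact (is_derive_ext f g z l). Qed.

Lemma Cderiv_const (c z : C) : Cderiv (fun _ => c) z 0.
Proof. exact (is_derive_const c z). Qed.

Lemma Cderiv_id (z : C) : Cderiv (fun x => x) z 1.
Proof. apply Cderiv_AbsRing; exact (@is_derive_id C_AbsRing z). Qed.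

Lemma Cderiv_plus (f g : C -> C) (z a b : C) :
  Cderiv f z a -> Cderiv g z b -> Cderiv (fun x => f x + g x) z (a + b).
Proof. exact (is_derive_plus f g z a b). Qed.

Lemma Cderiv_minus (f g : C -> C) (z a b : C) :
  Cderiv f z a -> Cderiv g z b -> Cderiv (fun x => f x - g x) z (a - b).
Proof. exact (is_derive_minus f g z a b). Qed.

Lemma Cderiv_mult (f g : C -> C) (z a b : C) :
  Cderiv f z a -> Cderiv g z b -> Cderiv (fun x => f x * g x) z (a * g z + f z * b).
Proof.
  rewrite !Cderiv_AbsRing; intros Hf Hg.
  exact (is_derive_mult f g z a b Hf Hg Cmult_comm).
Qed.

Lemma Cderiv_comp (f u : C -> C) (z a b : C) :
  Cderiv f (u z) a -> Cderiv u z b -> Cderiv (fun x => f (u x)) z (a * b).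
Proof.
  intros Hf Hu; apply Cderiv_AbsRing in Hu.
  apply (Cderiv_eq _ _ (b * a)); [exact (is_derive_comp f u z a b Hf Hu) | ring].
Qed.

Lemma Cderiv_unique (f : C -> C) (z a b : C) : Cderiv f z a -> Cderiv f z b -> a = b.
Proof.
  intros Ha Hb; rewrite <- (is_C_derive_unique _ _ _ Ha).
  exact (is_C_derive_unique _ _ _ Hb).
Qed.

Lemma Cderiv_of_zero (f f' : C -> C) :
  (forall z, f z = 0) -> (forall z, Cderiv f z (f' z)) -> forall z, f' z = 0.
Proof.
  intros Hf0 Hf' z; apply (Cderiv_unique f z); [exact (Hf' z) |].
  apply (Cderiv_ext (fun _ => 0)); [intro; now rewrite Hf0 | apply Cderiv_const].
Qed.

Ltac Cderiv_solve :=
  repeat match goal with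
  | |- Cderiv (fun _ => ?c) _ _ => apply Cderiv_const
  | |- Cderiv (fun x => _ + _) _ _ => apply Cderiv_plus
  | |- Cderiv (fun x => _ - _) _ _ => apply Cderiv_minus
  | |- Cderiv (fun x => _ * _) _ _ => apply Cderiv_mult
  | H : forall z, Cderiv ?g z _ |- Cderiv ?g _ _ => apply H
  | H : forall z, Cderiv ?g z _ |- Cderiv (fun x => ?g (@?u x)) _ _ =>
      eapply (Cderiv_comp g u); [apply H |]
  end.

Definition Cderiv3 (f f1 f2 f3 : C -> C) : Prop :=
  (forall z, Cderiv f z (f1 z)) /\ (forall z, Cderiv f1 z (f2 z))
  /\ (forall z, Cderiv f2 z (f3 z)).

Section ThirdDerivatives.

Variables (f f1 f2 f3 g g1 g2 g3 : C -> C).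
Hypotheses (Hf : Cderiv3 f f1 f2 f3) (Hg : Cderiv3 g g1 g2 g3).

Lemma Cderiv3_of_zero : (forall z, f z = 0) -> forall z, f3 z = 0.
Proof.
  destruct Hf as (Hf1 & Hf2 & Hf3); intro Hf0.
  exact (Cderiv_of_zero _ _ (Cderiv_of_zero _ _ (Cderiv_of_zero _ _ Hf0 Hf1) Hf2) Hf3).
Qed.

Lemma Cderiv3_plus :
  Cderiv3 (fun z => f z + g z) (fun z => f1 z + g1 z) (fun z => f2 z + g2 z)
    (fun z => f3 z + g3 z).
Proof.
  destruct Hf as (Hf1 & Hf2 & Hf3), Hg as (Hg1 & Hg2 & Hg3).
  refine (conj _ (conj _ _)); intro z; Cderiv_solve.
Qed.

Lemma Cderiv3_minus :
  Cderiv3 (fun z => f z - g z) (fun z => f1 z - g1 z) (fun z => f2 z - g2 z)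
    (fun z => f3 z - g3 z).
Proof.
  destruct Hf as (Hf1 & Hf2 & Hf3), Hg as (Hg1 & Hg2 & Hg3).
  refine (conj _ (conj _ _)); intro z; Cderiv_solve.
Qed.

Lemma Cderiv3_mult :
  Cderiv3 (fun z => f z * g z)
    (fun z => f1 z * g z + f z * g1 z)
    (fun z => f2 z * g z + 2 * f1 z * g1 z + f z * g2 z)
    (fun z => f3 z * g z + 3 * f2 z * g1 z + 3 * f1 z * g2 z + f z * g3 z).
Proof.
  destruct Hf as (Hf1 & Hf2 & Hf3), Hg as (Hg1 & Hg2 & Hg3).
  refine (conj _ (conj _ _)); intro z; (eapply Cderiv_eq; [Cderiv_solve | cbv beta; ring]).
Qed.

Lemma Cderiv3_comp :
  Cderiv3 (fun z => f (g z))
    (fun z => f1 (g z) * g1 z)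
    (fun z => f2 (g z) * (g1 z * g1 z) + f1 (g z) * g2 z)
    (fun z => f3 (g z) * (g1 z * g1 z * g1 z) + 3 * f2 (g z) * g1 z * g2 z
              + f1 (g z) * g3 z).
Proof.
  destruct Hf as (Hf1 & Hf2 & Hf3), Hg as (Hg1 & Hg2 & Hg3).
  refine (conj _ (conj _ _)); intro z; (eapply Cderiv_eq; [Cderiv_solve | cbv beta; ring]).
Qed.

End ThirdDerivatives.

Lemma Cderiv3_const (c : C) : Cderiv3 (fun _ => c) (fun _ => 0) (fun _ => 0) (fun _ => 0).
Proof. refine (conj _ (conj _ _)); intro; apply Cderiv_const. Qed.

Lemma Cderiv3_id : Cderiv3 (fun z => z) (fun _ => 1) (fun _ => 0) (fun _ => 0).
Proof. refine (conj _ (conj _ _)); intro; [apply Cderiv_id | apply Cderiv_const ..]. Qed.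

Ltac Cderiv3_solve :=
  repeat match goal with
  | |- Cderiv3 (fun _ => ?c) _ _ _ => apply Cderiv3_const
  | |- Cderiv3 (fun x => x) _ _ _ => apply Cderiv3_id
  | |- Cderiv3 (fun x => _ + _) _ _ _ => apply Cderiv3_plus
  | |- Cderiv3 (fun x => _ - _) _ _ _ => apply Cderiv3_minus
  | |- Cderiv3 (fun x => _ * _) _ _ _ => apply Cderiv3_mult
  | |- Cderiv3 (Cmult ?c) _ _ _ => change (Cmult c) with (fun z => c * z)
  | H : Cderiv3 ?g _ _ _ |- Cderiv3 ?g _ _ _ => exact H
  | H : Cderiv3 ?g _ _ _ |- Cderiv3 (fun x => ?g (@?u x)) _ _ _ =>
      eapply (Cderiv3_comp g _ _ _ u); [exact H |]
  end.

Lemma odd_fun_0 (f : C -> C) : odd_fun f -> f 0 = 0.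
Proof.
  intros Hodd; pose proof (Hodd 0) as H0.
  replace (Copp 0) with (RtoC 0) in H0 by ring.
  replace (f 0) with (/ 2 * (f 0 + f 0)) by (field; apply RtoC_neq_0; lra).
  rewrite H0 at 2; ring.
Qed.

Lemma quartic_eq_diagonal (f : C -> C) (s t : C) :
  odd_fun f -> quartic_eq f ->
  f (s + t) * f (s + t) * f (s + t) * f (s - t) - f (s + 2 * t) * (f s * f s * f s)
  + f (2 * s + t) * (f t * f t * f t) = 0.
Proof.
  intros Hodd Hq; pose proof (Hq (s + t) (s + t) (s + t) (s - t)) as E.
  assert (H2 : RtoC 2 <> 0) by (apply RtoC_neq_0; lra).
  replace ((s + t + (s + t) + (s + t) - (s - t)) / 2) with (s + 2 * t) in E by now field.
  replace ((s + t + (s + t) - (s + t) + (s - t)) / 2) with s in E by now field.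
  replace ((s + t - (s + t) + (s + t) + (s - t)) / 2) with s in E by now field.
  replace ((- (s + t) + (s + t) + (s + t) + (s - t)) / 2) with s in E by now field.
  replace ((s + t + (s + t) + (s + t) + (s - t)) / 2) with (2 * s + t) in E by now field.
  replace ((s + t + (s + t) - (s + t) - (s - t)) / 2) with t in E by now field.
  replace ((s + t - (s + t) + (s + t) - (s - t)) / 2) with t in E by now field.
  replace ((s + t - (s + t) - (s + t) + (s - t)) / 2) with (- t) in E by now field.
  rewrite Hodd in E; rewrite <- E; ring.
Qed.

Theorem lemma4 (f : C -> C) :
  entire f ->
  odd_fun f ->
  (exists z0 : C, f z0 <> 0) ->
  quartic_eq f ->
  forall f1 f2 f3 : C -> C,
    (forall z, Cderiv f z (f1 z)) ->
    (forall z, Cderiv f1 z (f2 z)) ->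
    (forall z, Cderiv f2 z (f3 z)) ->
    forall z : C,
      (f1 0) ^ 3 * f (2 * z)
      = (f z) ^ 3 * f3 z - 3 * (f z) ^ 2 * f1 z * f2 z + 2 * f z * (f1 z) ^ 3.
Proof.
  intros _ Hodd _ Hq f1 f2 f3 Hd1 Hd2 Hd3 s.
  assert (Hf : Cderiv3 f f1 f2 f3) by exact (conj Hd1 (conj Hd2 Hd3)).
  set (G := fun t => f (s + t) * f (s + t) * f (s + t) * f (s - t)
    - f (s + 2 * t) * (f s * f s * f s) + f (2 * s + t) * (f t * f t * f t)).
  eassert (HG : Cderiv3 G _ _ _) by (unfold G; Cderiv3_solve).
  pose proof (Cderiv3_of_zero _ _ _ _ HG (fun t => quartic_eq_diagonal f s t Hodd Hq) 0)
    as E; cbv beta in E.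
  replace (s + 0) with s in E by ring.
  replace (s - 0) with s in E by ring.
  replace (s + 2 * 0) with s in E by ring.
  replace (2 * s + 0) with (2 * s) in E by ring.
  rewrite (odd_fun_0 f Hodd) in E.
  apply (Cmult_minus_eq_0 6); [apply RtoC_neq_0; lra | refine (eq_trans _ E); ring].
Qed.
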